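(* Let $\mathscr{X}$ be a totally bounded normed metric space with $\|x\|\le1$ for all $x$, consider the $\epsilon$-perturbation channel on $\mathscr{X}$ described in the context, let $0<\epsilon\le1$ and $0\le\delta<m_{\mathscr{Y}}(V_\epsilon)$. Then $$C^\delta_\epsilon=\sup\Big\{ I_{\tilde\delta/|[\![X]\!]|}(Y;X)\ :\ \tilde\delta\ge0,\ X\in\mathscr{F}_{\tilde\delta},\ \tilde\delta\le \delta/m_{\mathscr{Y}}([\![Y]\!])\Big\}\ \text{bits},$$ where for each transmitted UV $X$, $Y$ denotes the corresponding received UV.
   Context: Uncertain variables (UVs): a UV is a map $U$ from a sample space $\Omega$ to a set; jointly considered UVs share $\Omega$. $[\![U]\!]=\{U(\omega)\}$; $[\![U|w]\!]=\{U(\omega):W(\omega)=w\}$, $[\![U|W]\!]=\{[\![U|w]\!]:w\in[\![W]\!]\}$. An uncertainty function on a set $\mathscr{U}$ is a map $m$ on subsets of $\mathscr{U}$ with $m(\emptyset)=0$, $0<m(S)<\infty$ for nonempty $S$, $\max\{m(S_1),m(S_2)\}\le m(S_1\cup S_2)$. Association: with uncertainty functions $m_{\mathscr{X}},m_{\mathscr{Y}}$ on the value sets of $X,Y$, $\mathscr{A}(X;Y)=\{m_{\mathscr{X}}([\![X|y_1]\!]\cap[\![X|y_2]\!])/m_{\mathscr{X}}([\![X]\!]):y_1\ne y_2\in[\![Y]\!]\}\setminus\{0\}$, $\mathscr{A}(Y;X)=\{m_{\mathscr{Y}}([\![Y|x_1]\!]\cap[\![Y|x_2]\!])/m_{\mathscr{Y}}([\![Y]\!]):x_1\ne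 x_2\in[\![X]\!]\}\setminus\{0\}$. $\mathscr{A}\succ\delta$: all elements $>\delta$ (false for $\emptyset$); $\mathscr{A}\preceq\delta$: all elements $\le\delta$ (true for $\emptyset$). $(X,Y)\stackrel{d}{\leftrightarrow}(\delta_1,\delta_2)$ iff $\mathscr{A}(X;Y)\succ\delta_1,\mathscr{A}(Y;X)\succ\delta_2$; $(X,Y)\stackrel{a}{\leftrightarrow}(\delta_1,\delta_2)$ iff $\mathscr{A}(X;Y)\preceq\delta_1,\mathscr{A}(Y;X)\preceq\delta_2$. $\delta$-mutual information: for UVs $U$ (values in $\mathscr{U}$ with uncertainty function $m_{\mathscr{U}}$) and $W$, points $u,u'\in[\![U]\!]$ are $\delta$-connected via $[\![U|W]\!]$ if there are $w_1,\dots,w_N\in[\![W]\!]$ with $u\in[\![U|w_1]\!]$, $u'\in[\![U|w_N]\!]$, $m_{\mathscr{U}}([\![U|w_i]\!]\cap[\![U|w_{i-1}]\!])/m_{\mathscr{U}}([\![U]\!])>\delta$ for $1<i\le N$; a set is $\delta$-connected if all pairs of its points are. A $\delta$-overlap family $[\![U|W]\!]^*_\delta$ is a family of distinct subsets covering $[\![U]\!]$, of largest cardinality among covering families such that (i) each member is $\delta$-connected and contains some $[\![U|w]\!]$; (ii) distinct members $S_1,S_2$ satisfy $m_{\mathscr{U}}(S_1\cap S_2)\le\delta\, m_{\mathscr{U}}([\![U]\!])$; (iii) each $[\![U|w]\!]$ lies in some member. $I_\delta(U;W)=\log_2|[\![U|W]\!]^*_\delta|$ if such a family exists, else $0$. Channel: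 the output space is $\mathscr{Y}=\mathscr{X}$; $m_{\mathscr{X}},m_{\mathscr{Y}}$ are uncertainty functions on $\mathscr{X},\mathscr{Y}$ with $m_{\mathscr{Y}}(\mathscr{Y})=1$. $S_\epsilon(x)=\{y\in\mathscr{Y}:\|x-y\|\le\epsilon\}$; $V_\epsilon=S_\epsilon(x^* )$ where $x^*$ minimizes $m_{\mathscr{Y}}(S_\epsilon(x))$ over $x\in\mathscr{X}$. A codebook is a discrete set $\mathcal{C}\subseteq\mathscr{X}$. $e_\epsilon(x_1,x_2)=m_{\mathscr{Y}}(S_\epsilon(x_1)\cap S_\epsilon(x_2))/m_{\mathscr{Y}}(\mathscr{Y})$. $\mathcal{C}$ is $(\epsilon,\delta)$-distinguishable if $e_\epsilon(x_1,x_2)\le\delta/|\mathcal{C}|$ for all distinct $x_1,x_2\in\mathcal{C}$; $C^\delta_\epsilon=\sup\log_2|\mathcal{C}|$ over $(\epsilon,\delta)$-distinguishable codebooks. For a codebook $\mathcal{C}$, the transmitted UV $X$ and received UV $Y$ satisfy $[\![X]\!]=\mathcal{C}$, $[\![Y]\!]=\bigcup_{x\in\mathcal{C}}S_\epsilon(x)$, $[\![Y|x]\!]=\{y\in[\![Y]\!]:\|x-y\|\le\epsilon\}$, $[\![X|y]\!]=\{x\in[\![X]\!]:\|x-y\|\le\epsilon\}$. Feasible set: $\mathscr{F}_\delta$ is the set of transmitted UVs $X$ with $[\![X]\!]\subseteq\mathscr{X}$ a codebook such that either $(X,Y)\stackrel{d}{\leftrightarrow}(0,\delta/|[\![X]\!]|)$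 or $(X,Y)\stackrel{a}{\leftrightarrow}(1,\delta/|[\![X]\!]|)$. *)

From HB Require Import structures.
From mathcomp Require Import all_boot all_order all_algebra.
From mathcomp Require Import all_classical all_reals all_analysis.
Set Implicit Arguments.
Unset Strict Implicit.
Unset Printing Implicit Defensive.
Import Order.TTheory GRing.Theory Num.Theory.
Import numFieldNormedType.Exports.
Local Open Scope classical_set_scope.
Local Open Scope ring_scope.

(* number of elements of a set (meaningful for finite sets) *)
Definition card_nat {T : Type} (A : set T) : nat :=
  xget 0%N [set n : nat | (A #= `I_n)%card].

Definition log2 {R : realType} (x : R) : R := ln x / ln 2.

Definition log2_card {R : realType} {T : Type} (F : set T) : \bar R :=
  if pselect (finite_set F) is left _ then (log2 ((card_nat F)%:R : R))%:E
  else +oo%E.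

Definition uncertainty_fun {R : realType} {T : Type} (D : set T)
  (m : set T -> R) : Prop :=
  [/\ m set0 = 0,
      (forall S, S `<=` D -> S !=set0 -> 0 < m S) &
      (forall S1 S2, S1 `<=` D -> S2 `<=` D ->
          Num.max (m S1) (m S2) <= m (S1 `|` S2))].

Definition uv_rng {Omega T : Type} (U : Omega -> T) : set T := range U.
Definition uv_crng {Omega T T' : Type} (U : Omega -> T) (W : Omega -> T')
  (w : T') : set T :=
  [set U o | o in [set o | W o = w]].

Section UV.
Context {R : realType} {Omega T T' : Type}.


Definition assoc_set (m : set T -> R) (U : Omega -> T) (W : Omega -> T')
  : set R :=
  [set r | exists w1 w2, [/\ uv_rng W w1, uv_rng W w2, w1 <> w2 &
     r = m (uv_crng U W w1 `&` uv_crng U W w2) / m (uv_rng U)]] `\` [set 0].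

(* A > delta : all elements > delta (false for the empty set) *)
Definition set_succ (A : set R) (d : R) : Prop :=
  A !=set0 /\ forall r, A r -> d < r.
(* A <= delta : all elements <= delta (true for the empty set) *)
Definition set_preceq (A : set R) (d : R) : Prop :=
  forall r, A r -> r <= d.

Definition dconnected_pts (m : set T -> R) (U : Omega -> T) (W : Omega -> T')
  (d : R) (u u' : T) : Prop :=
  exists (w : nat -> T') (N : nat),
    [/\ (forall i, (i <= N)%N -> uv_rng W (w i)),
        uv_crng U W (w 0%N) u,
        uv_crng U W (w N) u' &
        (forall i, (0 < i <= N)%N ->
           d < m (uv_crng U W (w i) `&` uv_crng U W (w i.-1)) / m (uv_rng U))].

Definition dconnected_set (m : set T -> R) (U : Omega -> T) (W : Omega -> T')
  (d : R) (S : set T) : Prop :=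
  forall u u', S u -> S u' -> dconnected_pts m U W d u u'.

Definition overlap_candidate (m : set T -> R) (U : Omega -> T) (W : Omega -> T')
  (d : R) (F : set (set T)) : Prop :=
  [/\ uv_rng U `<=` \bigcup_(S in F) S,
      (forall S, F S -> dconnected_set m U W d S /\
                        exists w, uv_rng W w /\ uv_crng U W w `<=` S),
      (forall S1 S2, F S1 -> F S2 -> S1 <> S2 ->
                        m (S1 `&` S2) <= d * m (uv_rng U)) &
      (forall w, uv_rng W w -> exists S, F S /\ uv_crng U W w `<=` S)].

Definition overlap_family (m : set T -> R) (U : Omega -> T) (W : Omega -> T')
  (d : R) (F : set (set T)) : Prop :=
  overlap_candidate m U W d F /\
  forall G, overlap_candidate m U W d G -> (G #<= F)%card.

Definition I_delta (m : set T -> R) (U : Omega -> T) (W : Omega -> T')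
  (d : R) : \bar R :=
  match pselect (exists F, overlap_family m U W d F) with
  | left h => log2_card (projT1 (cid h))
  | right _ => 0%E
  end.

End UV.

Section Channel.
Context {R : realType} {V : normedModType R}.

Definition totally_bounded_set (X : set V) : Prop :=
  forall e : R, 0 < e -> exists Fc : set V,
    [/\ finite_set Fc, Fc `<=` X &
        X `<=` \bigcup_(c in Fc) [set y | `|c - y| < e]].

(* S_eps(x) = {y in Y : |x - y| <= eps}, with Y = X *)
Definition S_eps (X : set V) (eps : R) (x : V) : set V :=
  [set y | X y /\ `|x - y| <= eps].

Definition codebook (X : set V) (C : set V) : Prop :=
  [/\ C `<=` X, finite_set C & C !=set0].

Definition e_eps (X : set V) (mY : set V -> R) (eps : R) (x1 x2 : V) : R :=
  mY (S_eps X eps x1 `&` S_eps X eps x2) / mY X.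

Definition distinguishable (X : set V) (mY : set V -> R) (eps d : R)
  (C : set V) : Prop :=
  forall x1 x2, C x1 -> C x2 -> x1 <> x2 ->
    e_eps X mY eps x1 x2 <= d / (card_nat C)%:R.

Definition capacity (X : set V) (mY : set V -> R) (eps d : R) : \bar R :=
  ereal_sup [set (log2 ((card_nat C)%:R : R))%:E | C in
              [set C | codebook X C /\ distinguishable X mY eps d C]].

Definition channel_uvs {Omega : Type} (X : set V) (eps : R)
  (Xt Yt : Omega -> V) : Prop :=
  [/\ codebook X (uv_rng Xt),
      uv_rng Yt = \bigcup_(x in uv_rng Xt) S_eps X eps x,
      (forall x, uv_rng Xt x ->
         uv_crng Yt Xt x = [set y | uv_rng Yt y /\ `|x - y| <= eps]) &
      (forall y, uv_rng Yt y ->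
         uv_crng Xt Yt y = [set x | uv_rng Xt x /\ `|x - y| <= eps])].

Definition disassociated {Omega : Type} (mX mY : set V -> R)
  (Xt Yt : Omega -> V) (d1 d2 : R) : Prop :=
  set_succ (assoc_set mX Xt Yt) d1 /\ set_succ (assoc_set mY Yt Xt) d2.
Definition associated {Omega : Type} (mX mY : set V -> R)
  (Xt Yt : Omega -> V) (d1 d2 : R) : Prop :=
  set_preceq (assoc_set mX Xt Yt) d1 /\ set_preceq (assoc_set mY Yt Xt) d2.

Definition feasible {Omega : Type} (X : set V) (mX mY : set V -> R) (eps d : R)
  (Xt Yt : Omega -> V) : Prop :=
  channel_uvs X eps Xt Yt /\
  (disassociated mX mY Xt Yt 0 (d / (card_nat (uv_rng Xt))%:R) \/
   associated mX mY Xt Yt 1 (d / (card_nat (uv_rng Xt))%:R)).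

End Channel.

From HB Require Import structures.
From mathcomp Require Import all_boot all_order all_algebra.
From mathcomp Require Import all_classical all_reals all_analysis.
Import Order.TTheory GRing.Theory Num.Theory.
Import numFieldNormedType.Exports.
Local Open Scope classical_set_scope.
Local Open Scope ring_scope.

(* Every received set [[Y|x]] of the channel is the ball S_eps(x).  If the
   tolerance d of an overlap family of [[Y|X]] satisfies d m[[Y]] < m(S_eps x)
   for every codeword x, then no ball lies in two members of the family, since
   distinct members overlap in measure at most d m[[Y]].  Choosing a ball inside
   each member therefore maps the family injectively into the codebook, and the
   chosen centres form an (eps,delta)-distinguishable codebook of the same size.
   Conversely, the balls of an (eps,delta)-distinguishable codebook C form an
   overlap family, of the largest possible size |C|, of the channel with
   codebook C, and this channel is feasible because it is associated.  The
   hypothesis delta < m(V_eps) guarantees d m[[Y]] < m(S_eps x) for every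
   tolerance d = dt / |[[X]]| with dt <= delta / m[[Y]]. *)

Lemma card_natE {T : Type} {A : set T} {n : nat} :
  (A #= `I_n)%card -> card_nat A = n.
Proof.
move=> An; apply: xget_unique => // m /= Am.
by apply/card_eq_II; apply: card_eq_trans (card_esym Am) An.
Qed.

Lemma finite_set_card_gt0 {T : Type} {A : set T} :
  finite_set A -> A !=set0 -> exists2 n, (A #= `I_n)%card & (0 < n)%N.
Proof.
move=> [[|n] An] [x Ax]; last by exists n.+1.
by move: An; rewrite II0 card_eq0 => /eqP A0; rewrite A0 in Ax.
Qed.

Lemma log2_cardE {R : realType} {T : Type} {A : set T} {n : nat} :
  (A #= `I_n)%card -> log2_card A = (log2 (n%:R : R))%:E.
Proof.
move=> An; rewrite /log2_card; case: pselect => [_|]; first by rewrite (card_natE An).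
by case; exists n.
Qed.

Lemma ler_pdivn2l {R : numFieldType} {a : R} {k n : nat} :
  0 <= a -> (0 < k)%N -> (k <= n)%N -> a / n%:R <= a / k%:R.
Proof.
move=> a0 k0 kn; apply: ler_wpM2l => //.
by rewrite lef_pV2 ?posrE ?ltr0n ?ler_nat // (leq_trans k0).
Qed.

Section UncertaintyFunction.
Context {R : realType} {T : Type} {D : set T} {m : set T -> R}.
Hypothesis um : uncertainty_fun D m.

Lemma uncertainty_fun_le {A B : set T} : A `<=` B -> B `<=` D -> m A <= m B.
Proof.
case: um => _ _ mmax AB BD; have := mmax A B (subset_trans AB BD) BD.
by rewrite (setUidr AB) ge_max => /andP[].
Qed.

Lemma uncertainty_fun_gt0 {A : set T} : A `<=` D -> A !=set0 -> 0 < m A.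
Proof. by case: um => _ m_gt0 _; apply: m_gt0. Qed.

End UncertaintyFunction.

Lemma uv_crng_sub {Omega T T' : Type} (U : Omega -> T) (W : Omega -> T') w :
  uv_crng U W w `<=` uv_rng U.
Proof. by move=> _ [z _ <-]; exists z. Qed.

Section OverlapCandidate.
Context {R : realType} {Omega T T' : Type} {m : set T -> R}.
Context {U : Omega -> T} {W : Omega -> T'} {d : R} {G : set (set T)}.
Hypothesis cand : overlap_candidate m U W d G.

Lemma overlap_candidate_sub {S : set T} : G S -> S `<=` uv_rng U.
Proof.
case: cand => _ connG _ _ GS u Su; have [/(_ u u Su Su) + _] := connG S GS.
by move=> [w [N [_ Uw0 _ _]]]; apply: uv_crng_sub Uw0.
Qed.

Lemma overlap_candidate_neq0 : uv_rng W !=set0 -> G !=set0.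
Proof. by case: cand => _ _ _ coverW [w /coverW [S [GS _]]]; exists S. Qed.

End OverlapCandidate.

Section Channel.
Context {R : realType} {V : normedModType R} {X : set V} {eps : R}.

Lemma S_eps_center {x : V} : 0 <= eps -> X x -> S_eps X eps x x.
Proof. by move=> eps0 Xx; split; rewrite // subrr normr0. Qed.

Section ChannelUVs.
Context {Omega : Type} {Xt Yt : Omega -> V}.
Hypothesis ch : channel_uvs X eps Xt Yt.

Lemma channel_codebook : codebook X (uv_rng Xt).
Proof. by case: ch. Qed.

Lemma channel_rngY_sub : uv_rng Yt `<=` X.
Proof. by case: ch => _ -> _ _ y [x _ []]. Qed.

Lemma channel_crngY {x : V} : uv_rng Xt x -> uv_crng Yt Xt x = S_eps X eps x.
Proof.
case: (ch) => _ rngY crngY _ Xtx; rewrite crngY //.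
apply/seteqP; split=> y [Yty xy]; split=> //; first exact: channel_rngY_sub.
by rewrite rngY; exists x.
Qed.

Lemma channel_rngY_gt0 {mY : set V -> R} :
  uncertainty_fun X mY -> 0 <= eps -> 0 < mY (uv_rng Yt).
Proof.
move=> umY eps0; apply: (uncertainty_fun_gt0 umY channel_rngY_sub).
case: ch => -[CX _ [x Cx]] -> _ _; exists x; exists x => //.
exact/S_eps_center/CX.
Qed.

Lemma channel_associated {mX mY : set V -> R} {d2 : R} :
  uncertainty_fun X mX ->
  (forall x1 x2, uv_rng Xt x1 -> uv_rng Xt x2 -> x1 <> x2 ->
     mY (S_eps X eps x1 `&` S_eps X eps x2) / mY (uv_rng Yt) <= d2) ->
  associated mX mY Xt Yt 1 d2.
Proof.
move=> umX overlapY; have [CX _ C0] := channel_codebook.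
split=> _ [[x1 [x2 [Xx1 Xx2 x12 ->]]] _]; last first.
  by rewrite (channel_crngY Xx1) (channel_crngY Xx2); apply: overlapY.
have mX_gt0 : 0 < mX (uv_rng Xt) := uncertainty_fun_gt0 umX CX C0.
rewrite ler_pdivrMr // mul1r.
by apply: (uncertainty_fun_le umX _ CX); apply: subIset; left; apply: uv_crng_sub.
Qed.

Context {mY : set V -> R} {d : R}.
Hypothesis umY : uncertainty_fun X mY.
Hypothesis tolerance_lt_ball :
  forall x, uv_rng Xt x -> d * mY (uv_rng Yt) < mY (S_eps X eps x).

Section Candidate.
Context {G : set (set V)}.
Hypothesis cand : overlap_candidate mY Yt Xt d G.

Lemma overlap_member_sub {S : set V} : G S -> S `<=` X.
Proof. by move=> GS y /(overlap_candidate_sub cand GS)/channel_rngY_sub. Qed.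

Lemma overlap_member_ball {S : set V} :
  G S -> exists x, uv_rng Xt x /\ S_eps X eps x `<=` S.
Proof.
case: cand => _ connG _ _ /connG[_ [x [Xtx sub]]].
by exists x; rewrite -(channel_crngY Xtx).
Qed.

Lemma overlap_members_eq {S1 S2 : set V} {x : V} : G S1 -> G S2 ->
  uv_rng Xt x -> S_eps X eps x `<=` S1 -> S_eps X eps x `<=` S2 -> S1 = S2.
Proof.
move=> GS1 GS2 Xtx sub1 sub2; apply: contrapT => S12.
case: cand => _ _ overlapG _; have := overlapG _ _ GS1 GS2 S12.
have S12X : S1 `&` S2 `<=` X := subIset (or_introl (overlap_member_sub GS1)).
have sub12 : S_eps X eps x `<=` S1 `&` S2 by rewrite subsetI.
have := uncertainty_fun_le umY sub12 S12X.
by move=> /le_trans le1 /le1; rewrite leNgt tolerance_lt_ball.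
Qed.

Lemma overlap_candidate_center : exists c : set V -> V,
  (forall S, G S -> uv_rng Xt (c S) /\ S_eps X eps (c S) `<=` S) /\
  {in G &, injective c}.
Proof.
pose centers S := [set x | uv_rng Xt x /\ S_eps X eps x `<=` S].
pose c S := xget 0 (centers S).
have cP S : G S -> centers S (c S).
  by move=> GS; apply: xgetPex; apply: overlap_member_ball.
exists c; split=> // S1 S2; rewrite !in_setE => GS1 GS2 c12.
have [Xtc sub1] := cP _ GS1; have [_ sub2] := cP _ GS2.
by apply: (overlap_members_eq GS1 GS2 Xtc sub1); rewrite c12.
Qed.

Lemma overlap_candidate_card_le : (G #<= uv_rng Xt)%card.
Proof.
have [c [cP c_inj]] := overlap_candidate_center.
apply: card_le_trans (subset_card_le (_ : c @` G `<=` _)).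
  by have /card_eqPle[] := inj_card_eq c_inj.
by move=> _ [S GS <-]; case: (cP S GS).
Qed.

Lemma overlap_candidate_codebook {delta : R} {k : nat} :
  mY X = 1 -> (G #= `I_k)%card -> d * mY (uv_rng Yt) <= delta / k%:R ->
  exists C, [/\ codebook X C, distinguishable X mY eps delta C & card_nat C = k].
Proof.
move=> mYX Gk dk; have [c [cP c_inj]] := overlap_candidate_center.
have cGk : (c @` G #= `I_k)%card := card_eq_trans (inj_card_eq c_inj) Gk.
have [CX _ C0] := channel_codebook.
exists (c @` G); rewrite (card_natE cGk); split=> //.
  split; [|by exists k|].
  - by move=> _ [S GS <-]; apply/CX; case: (cP S GS).
  - have [S GS] := overlap_candidate_neq0 cand C0; by exists (c S), S.
move=> _ _ [S1 GS1 <-] [S2 GS2 <-] c12; rewrite /e_eps mYX divr1 (card_natE cGk).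
have S12 : S1 <> S2 by move=> S12; apply: c12; rewrite S12.
have [_ sub1] := cP _ GS1; have [_ sub2] := cP _ GS2.
have S12X : S1 `&` S2 `<=` X := subIset (or_introl (overlap_member_sub GS1)).
apply: le_trans (uncertainty_fun_le umY (setISS sub1 sub2) S12X) _.
by case: cand => _ _ overlapG _; apply: le_trans (overlapG _ _ GS1 GS2 S12) dk.
Qed.

End Candidate.

Section Balls.
Hypothesis balls_overlap : forall x1 x2, uv_rng Xt x1 -> uv_rng Xt x2 ->
  x1 <> x2 -> mY (S_eps X eps x1 `&` S_eps X eps x2) <= d * mY (uv_rng Yt).

Local Notation balls := (S_eps X eps @` uv_rng Xt).

Lemma balls_overlap_candidate : overlap_candidate mY Yt Xt d balls.
Proof.
split.
- case: ch => _ -> _ _ y [x Xtx Sy].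
  by exists (S_eps X eps x) => //; exists x.
- move=> _ [x Xtx <-]; rewrite -(channel_crngY Xtx); split; last by exists x; split.
  by move=> u u' Su Su'; exists (fun=> x), 0%N; split=> // -[].
- move=> _ _ [x1 Xtx1 <-] [x2 Xtx2 <-] S12; apply: balls_overlap => // x12.
  by apply: S12; rewrite x12.
- move=> x Xtx; exists (S_eps X eps x); split; first by exists x.
  by rewrite (channel_crngY Xtx).
Qed.

Lemma balls_card : (balls #= uv_rng Xt)%card.
Proof.
apply: inj_card_eq => x1 x2; rewrite !in_setE => Xtx1 Xtx2 S12.
apply: contrapT => x12; have := balls_overlap _ _ Xtx1 Xtx2 x12.
by rewrite -S12 setIid leNgt tolerance_lt_ball.
Qed.

Lemma balls_overlap_family : overlap_family mY Yt Xt d balls.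
Proof.
split; first exact: balls_overlap_candidate.
move=> G candG; rewrite (card_le_eqr balls_card).
exact: overlap_candidate_card_le.
Qed.

End Balls.
End ChannelUVs.
End Channel.

Lemma I_delta_overlap_family {R : realType} {Omega T T' : Type}
  (m : set T -> R) (U : Omega -> T) (W : Omega -> T') (d : R)
  (F : set (set T)) (n : nat) :
  overlap_family m U W d F -> (F #= `I_n)%card -> I_delta m U W d = (log2 n%:R)%:E.
Proof.
move=> [candF maxF] Fn; rewrite /I_delta; case: pselect => [h|]; last first.
  by case; exists F.
case: (projT2 (cid h)) => candF' maxF'; apply: log2_cardE.
apply: card_eq_trans Fn; apply/card_eqPle; split; [exact: maxF|exact: maxF'].
Qed.

Section CodebookChannel.
Context {R : realType} {V : normedModType R} (X : set V) (eps : R) (C : set V).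

Definition codebook_outcome := {p : V * V | C p.1 /\ S_eps X eps p.1 p.2}.
Definition codebook_input (p : codebook_outcome) : V := (sval p).1.
Definition codebook_output (p : codebook_outcome) : V := (sval p).2.

End CodebookChannel.

Section CodebookChannelUVs.
Context {R : realType} {V : normedModType R} {X : set V} {eps : R} {C : set V}.
Local Notation input := (codebook_input X eps C).
Local Notation output := (codebook_output X eps C).

Hypotheses (cbC : codebook X C) (eps0 : 0 <= eps).

Lemma codebook_input_rng : uv_rng input = C.
Proof.
apply/seteqP; split=> [_ [[[x y] [Cx _]] _ <-] //|x Cx].
have [CX _ _] := cbC.
by exists (exist _ (x, x) (conj Cx (S_eps_center eps0 (CX x Cx)))).
Qed.

Lemma codebook_channel_uvs : channel_uvs X eps input output.
Proof.
have rngY : uv_rng output = \bigcup_(x in C) S_eps X eps x.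
  apply/seteqP; split=> [_ [[[x y] [Cx Sy]] _ <-]|y [x Cx Sy]]; first by exists x.
  by exists (exist _ (x, y) (conj Cx Sy)).
have Y_X y : uv_rng output y -> X y by rewrite rngY => -[x _ []].
have near_p p : `|input p - output p| <= eps.
  exact: (svalP p).2.2.
split; rewrite ?codebook_input_rng //.
- move=> x Cx; apply/seteqP; split=> [_ [p <- <-]|y [Yy xy]].
    by split; [exists p|exact: near_p].
  by exists (exist _ (x, y) (conj Cx (conj (Y_X _ Yy) xy))).
- move=> y Yy; apply/seteqP; split=> [_ [p <- <-]|x [Cx xy]].
    by split; [exact: (svalP p).1|exact: near_p].
  by exists (exist _ (x, y) (conj Cx (conj (Y_X _ Yy) xy))).
Qed.

End CodebookChannelUVs.

Lemma scaled_tolerance_le {R : numFieldType} {dt m delta : R} (n : nat) :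
  0 < m -> dt <= delta / m -> dt / n%:R * m <= delta / n%:R.
Proof.
move=> m0 dt_le; rewrite mulrAC ler_wpM2r ?invr_ge0 ?ler0n //.
by rewrite -ler_pdivlMr.
Qed.

Section Capacity.
Context {R : realType} {V : normedModType R}.
Context {X : set V} {mX mY : set V -> R} {eps delta : R} {xstar : V}.
Hypotheses (umX : uncertainty_fun X mX) (umY : uncertainty_fun X mY).
Hypotheses (mYX : mY X = 1) (eps0 : 0 <= eps) (Xxstar : X xstar).
Hypothesis xstar_min : forall x, X x -> mY (S_eps X eps xstar) <= mY (S_eps X eps x).
Hypotheses (delta0 : 0 <= delta) (delta_lt : delta < mY (S_eps X eps xstar)).

Lemma capacity_ge0 : (0 <= capacity X mY eps delta)%E.
Proof.
apply: le_trans (ereal_sup_ubound _) => /=; last first.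
  exists [set xstar]; last by rewrite (card_natE card_set1).
  split; last by move=> x1 x2 -> ->.
  by split; [move=> x ->|exact: finite_set1|exists xstar].
by rewrite /log2 ln1 mul0r.
Qed.

Lemma channel_tolerance_lt_ball {Omega : Type} {Xt Yt : Omega -> V} {dt : R} {n : nat} :
  channel_uvs X eps Xt Yt -> (0 < n)%N -> dt <= delta / mY (uv_rng Yt) ->
  forall x, uv_rng Xt x -> dt / n%:R * mY (uv_rng Yt) < mY (S_eps X eps x).
Proof.
move=> ch n0 dt_le x Xtx; have [CX _ _] := channel_codebook ch.
apply: le_lt_trans (scaled_tolerance_le n (channel_rngY_gt0 ch umY eps0) dt_le) _.
have delta_lt_ball := lt_le_trans delta_lt (xstar_min _ (CX x Xtx)).
apply: le_lt_trans delta_lt_ball.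
by have := ler_pdivn2l delta0 (ltnSn 0) n0; rewrite divr1.
Qed.

Lemma I_delta_le_capacity {Omega : Type} {Xt Yt : Omega -> V} {dt : R} :
  channel_uvs X eps Xt Yt -> dt <= delta / mY (uv_rng Yt) ->
  (I_delta mY Yt Xt (dt / (card_nat (uv_rng Xt))%:R) <= capacity X mY eps delta)%E.
Proof.
move=> ch dt_le; have [_ finC C0] := channel_codebook ch.
have [n Cn n0] := finite_set_card_gt0 finC C0; rewrite (card_natE Cn).
have large := channel_tolerance_lt_ball ch n0 dt_le.
rewrite /I_delta; case: pselect => [h|_]; last exact: capacity_ge0.
case: (projT2 (cid h)) => candF _; set F := projT1 (cid h) in candF *.
have FC := overlap_candidate_card_le ch umY large candF.
have [k Fk k0] :=
  finite_set_card_gt0 (card_le_finite FC finC) (overlap_candidate_neq0 candF C0).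
have kn : (k <= n)%N by rewrite -card_le_II -(card_le_eql Fk) -(card_le_eqr Cn).
have tolerance : dt / n%:R * mY (uv_rng Yt) <= delta / k%:R.
  apply: le_trans (scaled_tolerance_le n (channel_rngY_gt0 ch umY eps0) dt_le) _.
  exact: ler_pdivn2l.
have [C [cbC distC Ck]] :=
  overlap_candidate_codebook ch umY large candF mYX Fk tolerance.
by rewrite (log2_cardE Fk); apply: ereal_sup_ubound; exists C; rewrite ?Ck.
Qed.

Lemma distinguishable_feasible_I_delta {C : set V} :
  codebook X C -> distinguishable X mY eps delta C ->
  exists (dt : R) (Omega : Type) (Xt Yt : Omega -> V),
    [/\ 0 <= dt, feasible X mX mY eps dt Xt Yt, dt <= delta / mY (uv_rng Yt) &
        (log2 (card_nat C)%:R)%:E =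
          I_delta mY Yt Xt (dt / (card_nat (uv_rng Xt))%:R)].
Proof.
move=> cbC distC; have [_ finC C0] := cbC.
have [n Cn n0] := finite_set_card_gt0 finC C0.
pose Xt := codebook_input X eps C; pose Yt := codebook_output X eps C.
have ch : channel_uvs X eps Xt Yt := codebook_channel_uvs cbC eps0.
have rngX : uv_rng Xt = C := codebook_input_rng cbC eps0.
have mY_gt0 : 0 < mY (uv_rng Yt) := channel_rngY_gt0 ch umY eps0.
pose dt := delta / mY (uv_rng Yt).
have overlap x1 x2 : uv_rng Xt x1 -> uv_rng Xt x2 -> x1 <> x2 ->
    mY (S_eps X eps x1 `&` S_eps X eps x2) <= dt / n%:R * mY (uv_rng Yt).
  rewrite rngX mulrAC divfK ?gt_eqF // => Cx1 Cx2 x12.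
  by have := distC _ _ Cx1 Cx2 x12; rewrite /e_eps mYX divr1 (card_natE Cn).
have large := channel_tolerance_lt_ball ch n0 (lexx dt).
exists dt, (codebook_outcome X eps C), Xt, Yt.
rewrite rngX (card_natE Cn); split=> //.
- exact: divr_ge0 delta0 (ltW mY_gt0).
- split=> //; right; rewrite rngX (card_natE Cn).
  apply: (channel_associated ch umX) => x1 x2 Xtx1 Xtx2 x12.
  by rewrite ler_pdivrMr //; apply: overlap.
- symmetry; apply: I_delta_overlap_family (balls_overlap_family ch umY large overlap) _.
  by apply: card_eq_trans (balls_card large overlap) _; rewrite rngX.
Qed.

End Capacity.

Theorem theorem4 (R : realType) (V : normedModType R) (X : set V)
  (mX mY : set V -> R) (eps delta : R) (xstar : V) :
  totally_bounded_set X ->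
  (forall x, X x -> `|x| <= 1) ->
  uncertainty_fun X mX -> uncertainty_fun X mY -> mY X = 1 ->
  0 < eps -> eps <= 1 ->
  X xstar -> (forall x, X x -> mY (S_eps X eps xstar) <= mY (S_eps X eps x)) ->
  0 <= delta -> delta < mY (S_eps X eps xstar) ->
  capacity X mY eps delta =
  ereal_sup [set v : \bar R | exists (dt : R) (Omega : Type) (Xt Yt : Omega -> V),
     [/\ 0 <= dt,
         feasible X mX mY eps dt Xt Yt,
         dt <= delta / mY (uv_rng Yt) &
         v = I_delta mY Yt Xt (dt / (card_nat (uv_rng Xt))%:R)]].
Proof.
move=> _ _ umX umY mYX /ltW eps0 _ Xxstar xstar_min delta0 delta_lt.
apply/eqP; rewrite eq_le; apply/andP; split; apply/ereal_supP.
- move=> _ [C [cbC distC] <-].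
  have [dt [Om [Xt [Yt [dt0 feas dt_le ->]]]]] :=
    distinguishable_feasible_I_delta umX umY mYX eps0 xstar_min delta0 delta_lt
      cbC distC.
  by apply: ereal_sup_ubound; exists dt, Om, Xt, Yt.
- move=> _ [dt [Om [Xt [Yt [_ [ch _] dt_le ->]]]]].
  by apply: (I_delta_le_capacity umY mYX eps0 Xxstar xstar_min delta0 delta_lt
    ch dt_le).
Qed.
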